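(* For every $n\ge 1$, the sequence $\Lambda_n$ (defined in the context) contains every chain of the Greene–Kleitman symmetric chain decomposition of $Q_n$ exactly once.
   Context: Let $D$ be the set of all bitstrings (including the empty string $\varepsilon$) with equally many $0$s and $1$s such that every prefix contains at least as many $0$s as $1$s. The chains of the Greene–Kleitman symmetric chain decomposition of the hypercube $Q_n$ are exactly the paths encoded by strings of length $n$ over $\{0,1,*\}$ of the form $u_0*u_1*\cdots*u_{h-1}*u_h$ with $u_0,\ldots,u_h\in D$ (any $h\ge 0$); the vertices of such a chain are obtained by replacing the $*$s by $i$ ones followed by $h-i$ zeros, $i=0,\ldots,h$. The length $|C|$ of a chain $C$ is its number of $*$s. For a string $C$ over $\{0,1,*\}$ with at least two $*$s, $f(C)$ (resp. $\ell(C)$) is obtained by replacing the first two (resp. last two) $*$s by $0$ and $1$, respectively. For a sequence $\Gamma$, $\Gamma^R$ is its reversal. Define $\Lambda_0:=\varepsilon$ (the sequence with the single empty chain) and $\Lambda_1:=*$. For $n\ge 0$ and $\Lambda_n=C_1,\ldots,C_N$ set $\Lambda_{n+2}:=\rho(C_1),\ldots,\rho(C_N)$, where $\rho(C):=\lambda(C)$ if $|C|\equiv n\pmod 4$ and $\rho(C):=\lambda(C)^R$ otherwise, and for even $n$: $\lambda(C):=*C*,\ f( *C* ),\ f(\ell( *C* )),\ \ell( *C* )$ if $|C|\ge2$ and $\lambda(C):=*C*,\ 0C1$ if $|C|=0$; for odd $n$: $\lambda(C):=*C*,\ \ell( *C* ),\ \ell(f( *C* )),\ f( *C* )$ if $|C|\ge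 3$ and $\lambda(C):=*C*,\ \ell( *C* ),\ f( *C* )$ if $|C|=1$. *)

From mathcomp Require Import all_boot.
Set Implicit Arguments. Unset Strict Implicit. Unset Printing Implicit Defensive.

(* Symbols of the alphabet {0,1,*}: Some false = 0, Some true = 1, None = *. *)
Definition sym := option bool.
Definition s0 : sym := Some false.
Definition s1 : sym := Some true.
Definition star : sym := None.

(* Strings over {0,1,*}; a chain of Q_n is encoded by such a string. *)
Definition chain := seq sym.

Definition dyck (u : chain) : Prop :=
  all (fun x => x != star) u /\
  count_mem s0 u = count_mem s1 u /\
  (forall k, count_mem s1 (take k u) <= count_mem s0 (take k u)).

Fixpoint join_star (us : seq chain) : chain :=
  match us with
  | [::] => [::]
  | [:: u] => u
  | u :: us' => u ++ star :: join_star us'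
  end.

Definition GK_chain (n : nat) (C : chain) : Prop :=
  size C = n /\
  exists us : seq chain, us != [::] /\ (forall u, u \in us -> dyck u) /\
                         C = join_star us.

Definition len (C : chain) : nat := count_mem star C.

Fixpoint repl_first (b : sym) (C : chain) : chain :=
  match C with
  | [::] => [::]
  | x :: C' => if x == star then b :: C' else x :: repl_first b C'
  end.

(* f: first two stars -> 0 and 1 ; ell: last two stars -> 0 and 1 *)
Definition fC (C : chain) : chain := repl_first s1 (repl_first s0 C).
Definition ellC (C : chain) : chain := rev (repl_first s0 (repl_first s1 (rev C))).

Definition wrap (C : chain) : chain := star :: rcons C star.

Definition lam (n : nat) (C : chain) : seq chain :=
  let W := wrap C in
  if ~~ odd n then
    (if 2 <= len C then [:: W; fC W; fC (ellC W); ellC W]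
     else [:: W; s0 :: rcons C s1])
  else
    (if 3 <= len C then [:: W; ellC W; ellC (fC W); fC W]
     else [:: W; ellC W; fC W]).

Definition rho (n : nat) (C : chain) : seq chain :=
  if len C %% 4 == n %% 4 then lam n C else rev (lam n C).

Fixpoint Lambda (n : nat) : seq chain :=
  match n with
  | 0 => [:: [::]]
  | 1 => [:: [:: star]]
  | m.+2 => flatten (map (rho m) (Lambda m))
  end.

(* Read a word over {0,1,*} as a walk that steps up at 0, down at 1, and may
   contain * only at level 0. The GK chains of Q_n are exactly the words of
   length n whose walk returns from 0 to 0 ("balanced" words).
   Each rule of lambda maps a balanced C to a balanced word D two symbols
   longer, and C is recovered from D by undoing f (the leading 0 and its
   matching 1 become stars again), undoing ell in the same way on the
   mirror image, and deleting the two end stars; so the lists lambda(C) are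
   disjoint. Conversely, the end symbols of a balanced D of length n+2 tell
   which rule can produce D, and its first-return decomposition exhibits the
   chain C; since len C and n have the same parity, lambda_n offers that rule
   for C. *)

From mathcomp Require Import all_boot zify.
Set Implicit Arguments. Unset Strict Implicit. Unset Printing Implicit Defensive.

Fixpoint height (h : nat) (s : chain) : option nat :=
  match s with
  | [::] => Some h
  | Some false :: s' => height h.+1 s'
  | Some true :: s' => if h is h'.+1 then height h' s' else None
  | None :: s' => if h is 0 then height 0 s' else None
  end.

Local Notation balanced C := (height 0 C = Some 0).

Lemma height_cat h s t : height h (s ++ t) = obind (height^~ t) (height h s).
Proof. by elim: s h => [|[[]|] s IH] [|h] //=. Qed.

Lemma balanced_rcons_star C : balanced (rcons C star) <-> balanced C.
Proof. by rewrite -cats1 height_cat; case: (height 0 C) => [[|h]|]. Qed.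

Lemma height_rcons_s0 h C : height h (rcons C s0) <> Some 0.
Proof. by rewrite -cats1 height_cat; case: (height h C). Qed.

Lemma height_shift h h' k s :
  star \notin s -> height h s = Some h' -> height (h + k) s = Some (h' + k).
Proof.
elim: s h => [|x s IH] h; first by move=> _ [<-].
rewrite in_cons negb_or => /andP[+ /IH {}IH].
by case: x => [[]|] //= _; [case: h => [|h] // /IH | rewrite -addSn => /IH].
Qed.

Lemma len_cons x s : len (x :: s) = (x == star) + len s. Proof. by []. Qed.
Lemma len_cat s t : len (s ++ t) = len s + len t. Proof. exact: count_cat. Qed.
Lemma len_rcons s x : len (rcons s x) = len s + (x == star).
Proof. by rewrite -cats1 len_cat /= addn0. Qed.
Lemma len_starfree s : star \notin s -> len s = 0. Proof. by move/count_memPn. Qed.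
Lemma mem_star_len s : (star \in s) = (0 < len s).
Proof. by rewrite /len -has_pred1 has_count. Qed.

Lemma height_parity h h' s :
  height h s = Some h' -> odd (h' + len s) = odd (h + size s).
Proof.
elim: s h => [|x s IH] h; first by case=> ->; rewrite addn0.
rewrite len_cons; case: x => [[]|] /=.
- by case: h => // h /IH; rewrite add0n addSn addnS /= negbK.
- by move/IH; rewrite add0n addnS -addSn.
- by case: h => // /IH; rewrite add1n addnS /= => ->.
Qed.

Lemma odd_len_balanced C : balanced C -> odd (len C) = odd (size C).
Proof. exact: height_parity. Qed.

Lemma split_first_star s :
  star \in s -> exists a r, s = a ++ star :: r /\ star \notin a.
Proof.
elim: s => //= x s IH; rewrite in_cons.
case: (eqVneq star x) => [<- _|nx /= /IH [a [r [-> na]]]]; first by exists [::], s.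
by exists (x :: a), r; rewrite in_cons negb_or nx na.
Qed.

Lemma split_balanced_first_star Z : balanced Z -> star \in Z ->
  exists a r, [/\ Z = a ++ star :: r, star \notin a, balanced a & balanced r].
Proof.
move=> HZ /split_first_star [a [r [EZ na]]]; exists a, r.
by move: HZ; rewrite EZ height_cat; case: (height 0 a) => [[|h]|].
Qed.

Lemma first_return h h' M : height h.+1 M = Some h' -> h' <= h ->
  exists a t, [/\ M = a ++ s1 :: t, star \notin a, balanced a & height h t = Some h'].
Proof.
have [N] := ubnP (size M); elim: N M h h' => // N IHN [|x M] h h' /= szM.
  by case=> <-; rewrite ltnn.
case: x => [[]|] //= HM le; first by exists [::], M.
have [a1 [t1 [E1 n1 h1 ht1]]] := IHN M h.+1 h' szM HM (leqW le).
have [|a2 [t2 [E2 n2 h2 ht2]]] := IHN t1 h h' _ ht1 le.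
  by move: szM; rewrite E1 size_cat /=; lia.
exists (s0 :: a1 ++ s1 :: a2), t2; split => //.
- by rewrite E1 E2 /= -catA.
- by rewrite !(in_cons, mem_cat) (negbTE n1) (negbTE n2).
- by rewrite /= height_cat (height_shift 1 n1 h1).
Qed.

Definition prefix_bounded h (u : chain) :=
  forall k, count_mem s1 (take k u) <= h + count_mem s0 (take k u).

Lemma prefix_bounded_s0 h u : prefix_bounded h (s0 :: u) <-> prefix_bounded h.+1 u.
Proof.
split=> H k; first by have := H k.+1; rewrite /= addnS.
by case: k => [|k] //=; have := H k; rewrite addnS.
Qed.

Lemma prefix_bounded_s1 h u : prefix_bounded h (s1 :: u) <-> 0 < h /\ prefix_bounded h.-1 u.
Proof.
case: h => [|h]; first by split=> [/(_ 1) | []] //=; rewrite take0.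
split=> [H | [_ H] [|k] //=]; last by have := H k; rewrite addSn.
by split=> // k; have := H k.+1; rewrite /= addSn.
Qed.

Lemma count_mem_cons (y x : sym) (u : chain) :
  count_mem y (x :: u) = (x == y) + count_mem y u.
Proof. by []. Qed.

Lemma height_starfree h h' (u : chain) : star \notin u ->
  height h u = Some h' <->
  h' + count_mem s1 u = h + count_mem s0 u /\ prefix_bounded h u.
Proof.
elim: u h h' => [|x u IH] h h'.
  by move=> _ /=; split=> [[->] | [E _]]; [split=> // k; rewrite take_nil | congr Some; lia].
rewrite in_cons negb_or !count_mem_cons => /andP [nx /IH {}IH].
(* Generalized so that [/=] cannot rewrite the counts into terms [lia] does not match. *)
move: (count_mem s1 u) (count_mem s0 u) IH => c1 c0 IH.
case: x nx => [[]|] //= _.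
- rewrite prefix_bounded_s1; case: h => [|h]; first by split=> // -[_ []].
  by rewrite IH; split=> [[E K] | [E [_ K]]]; do ?split => //; lia.
- by rewrite prefix_bounded_s0 IH; split=> -[E K]; split=> //; lia.
Qed.

Lemma dyckE u : dyck u <-> star \notin u /\ balanced u.
Proof.
have all_star : all (fun x => x != star) u = (star \notin u).
  by elim: u => //= x u ->; rewrite in_cons negb_or eq_sym.
rewrite /dyck all_star.
split=> [[nu [E K]] | [nu /(height_starfree 0 0 nu) [E K]]]; split=> //.
by apply/(height_starfree 0 0 nu); split; [rewrite E | exact: K].
Qed.

Lemma balanced_join_star us : (forall u, u \in us -> dyck u) -> balanced (join_star us).
Proof.
elim: us => [|u us IH] //= Hus.
have [_ Hu] := (dyckE u).1 (Hus u (mem_head _ _)).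
have {}IH : balanced (join_star us).
  by apply: IH => v vus; apply: Hus; rewrite in_cons vus orbT.
by case: us IH Hus => // v us IH _; rewrite height_cat Hu.
Qed.

Lemma balanced_join_starP C : balanced C ->
  exists2 us, us != [::] & (forall u, u \in us -> dyck u) /\ C = join_star us.
Proof.
have [N] := ubnP (size C); elim: N C => // N IHN C SC HC.
have [Cs | nC] := boolP (star \in C); last first.
  by exists [:: C] => //; split=> // u; rewrite inE => /eqP ->; apply/dyckE.
have [a [r [HCa nr Ha Hr]]] := split_balanced_first_star HC Cs.
have [|us ne [Dus Er]] := IHN r _ Hr; first by move: SC; rewrite HCa size_cat /=; lia.
exists (a :: us) => //; split; last by rewrite HCa Er; case: us ne {Dus Er}.
by move=> u; rewrite in_cons => /orP [/eqP -> | /Dus]; [apply/dyckE | ].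
Qed.

Lemma GK_chainE n C : GK_chain n C <-> size C = n /\ balanced C.
Proof.
split=> [[<- [us [_ [Dus ->]]]] | [SC /balanced_join_starP [us ne [Dus EC]]]].
  by split=> //; exact: balanced_join_star.
by split=> //; exists us.
Qed.

Definition flip (x : sym) : sym := omap negb x.

(* Reversal with 0 and 1 exchanged: it conjugates f into ell, so facts about ell
   are derived from those about f. *)
Definition mirror (s : chain) : chain := rev (map flip s).

Lemma flipK : involutive flip. Proof. by case=> [[]|]. Qed.
Lemma mirror_cons x s : mirror (x :: s) = rcons (mirror s) (flip x).
Proof. by rewrite /mirror /= rev_cons. Qed.
Lemma mirror_rcons s x : mirror (rcons s x) = flip x :: mirror s.
Proof. by rewrite /mirror map_rcons rev_rcons. Qed.
Lemma mirror_cat s t : mirror (s ++ t) = mirror t ++ mirror s.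
Proof. by rewrite /mirror map_cat rev_cat. Qed.
Lemma mirrorK : involutive mirror.
Proof. by move=> s; rewrite /mirror map_rev revK (mapK flipK). Qed.
Lemma size_mirror s : size (mirror s) = size s.
Proof. by rewrite size_rev size_map. Qed.
Lemma len_mirror s : len (mirror s) = len s.
Proof. by rewrite /len /mirror count_rev count_map; apply: eq_count => -[[]|]. Qed.
Lemma mem_star_mirror s : (star \in mirror s) = (star \in s).
Proof. by rewrite !mem_star_len len_mirror. Qed.
Lemma mirror_wrap C : mirror (wrap C) = wrap (mirror C).
Proof. by rewrite /wrap mirror_cons mirror_rcons. Qed.

Lemma height_mirror h h' s : height h s = Some h' -> height h' (mirror s) = Some h.
Proof.
elim: s h => [|x s IH] h /=; first by case=> ->.
rewrite mirror_cons -cats1 height_cat.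
by case: x => [[]|] /=; [case: h => [|h] // /IH -> | move/IH -> | case: h => // /IH ->].
Qed.

Lemma balanced_mirror s : balanced s -> balanced (mirror s).
Proof. exact: height_mirror. Qed.

Lemma repl_first_cat_starfree b x y :
  star \notin x -> repl_first b (x ++ y) = x ++ repl_first b y.
Proof.
elim: x => //= z x IH; rewrite in_cons negb_or => /andP[nz /IH ->].
by rewrite eq_sym (negbTE nz).
Qed.

Lemma repl_first_cat_star b x y :
  star \in x -> repl_first b (x ++ y) = repl_first b x ++ y.
Proof.
elim: x => //= z x IH; rewrite in_cons eq_sym.
by case: eqP => //= _ /IH ->.
Qed.

Lemma repl_first_first_star b a r :
  star \notin a -> repl_first b (a ++ star :: r) = a ++ b :: r.
Proof. by move=> na; rewrite repl_first_cat_starfree //= eqxx. Qed.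

Lemma repl_first_rcons b s y :
  y != star -> repl_first b (rcons s y) = rcons (repl_first b s) y.
Proof.
move=> ny; elim: s => /= [|z s ->]; first by rewrite (negbTE ny).
by case: ifP.
Qed.

Lemma len_repl_first b s :
  b != star -> star \in s -> len (repl_first b s) = (len s).-1.
Proof.
move=> nb /split_first_star [a [r [-> na]]].
by rewrite repl_first_first_star // !len_cat !len_cons (negbTE nb) eqxx len_starfree.
Qed.

Lemma map_flip_repl_first b s :
  map flip (repl_first b s) = repl_first (flip b) (map flip s).
Proof. by elim: s => //= x s IH; case: x => [[]|] /=; rewrite ?IH. Qed.

Lemma fC_cons_star Z : fC (star :: Z) = s0 :: repl_first s1 Z.
Proof. by []. Qed.

Lemma ellC_mirror X : ellC X = mirror (fC (mirror X)).
Proof. by rewrite /ellC /fC /mirror !map_flip_repl_first map_rev (mapK flipK). Qed.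

Lemma size_wrap C : size (wrap C) = (size C).+2.
Proof. by rewrite /= size_rcons. Qed.
Lemma len_wrap C : len (wrap C) = (len C).+2.
Proof. by rewrite /wrap len_cons len_rcons eqxx addn1. Qed.

Lemma fC_cat x y : 2 <= len x -> fC (x ++ y) = fC x ++ y.
Proof.
move=> Hx; have x_star : star \in x by rewrite mem_star_len; lia.
have : star \in repl_first s0 x by rewrite mem_star_len len_repl_first //; lia.
by rewrite /fC repl_first_cat_star // => /repl_first_cat_star ->.
Qed.

Lemma ellC_cat x y : 2 <= len y -> ellC (x ++ y) = x ++ ellC y.
Proof.
by move=> Hy; rewrite !ellC_mirror mirror_cat fC_cat ?len_mirror // mirror_cat mirrorK.
Qed.

Lemma fC_ellC Y : 4 <= len Y -> fC (ellC Y) = ellC (fC Y).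
Proof.
move=> HY; have /split_first_star [a [r [EY na]]] : star \in Y by rewrite mem_star_len; lia.
have /split_first_star [b [m [Er nb]]] : star \in r.
  by rewrite mem_star_len; move: HY; rewrite EY len_cat len_cons (len_starfree na); lia.
have [X HX EX] : exists2 X, len X = 2 & Y = X ++ m.
  exists (a ++ star :: b ++ [:: star]); last by rewrite EY Er -catA /= -catA.
  by rewrite len_cat len_cons len_cat (len_starfree na) (len_starfree nb).
have Hm : 2 <= len m by move: HY; rewrite EX len_cat HX; lia.
by rewrite EX ellC_cat // !fC_cat ?HX // ellC_cat.
Qed.

Lemma len_fC X : 2 <= len X -> len (fC X) = (len X).-2.
Proof.
move=> HX; have HXs : star \in X by rewrite mem_star_len; lia.
have HXs' : star \in repl_first s0 X by rewrite mem_star_len len_repl_first //; lia.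
by rewrite /fC !len_repl_first.
Qed.

Lemma len_ellC X : 2 <= len X -> len (ellC X) = (len X).-2.
Proof. by move=> HX; rewrite ellC_mirror len_mirror len_fC len_mirror. Qed.

Lemma fC_wrap C : star \in C -> fC (wrap C) = s0 :: rcons (repl_first s1 C) star.
Proof. by move=> HC; rewrite /wrap fC_cons_star -cats1 repl_first_cat_star // cats1. Qed.

Lemma ellC_wrap C : star \in C ->
  ellC (wrap C) = star :: rcons (mirror (repl_first s1 (mirror C))) s1.
Proof.
move=> HC; rewrite ellC_mirror mirror_wrap fC_wrap ?mem_star_mirror //.
by rewrite mirror_cons mirror_rcons.
Qed.

Lemma fC_ellC_wrap C : star \in C ->
  fC (ellC (wrap C)) = s0 :: rcons (repl_first s1 (mirror (repl_first s1 (mirror C)))) s1.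
Proof. by move=> HC; rewrite ellC_wrap // fC_cons_star repl_first_rcons. Qed.

Lemma balanced_fC Z : balanced Z -> star \in Z -> balanced (fC (star :: Z)).
Proof.
move=> HZ /(split_balanced_first_star HZ) [a [r [-> na Ha Hr]]].
by rewrite fC_cons_star repl_first_first_star //= height_cat (height_shift 1 na Ha).
Qed.

Lemma balanced_ellC Z : balanced Z -> star \in Z -> balanced (ellC (rcons Z star)).
Proof.
move=> HZ HZs; rewrite ellC_mirror mirror_rcons; apply: balanced_mirror.
by apply: balanced_fC; rewrite ?mem_star_mirror //; apply: balanced_mirror.
Qed.

Lemma mem_lam n C D : odd (len C) = odd n ->
  (D \in lam n C) = [|| D == wrap C,
                        (0 < len C) && (D \in [:: fC (wrap C); ellC (wrap C)]),
                        (1 < len C) && (D == fC (ellC (wrap C)))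
                      | (len C == 0) && (D == s0 :: rcons C s1)].
Proof.
have Hcomm : 2 < len C -> ellC (fC (wrap C)) = fC (ellC (wrap C)).
  by move=> HC; rewrite fC_ellC // len_wrap; lia.
move=> Hpar; rewrite /lam.
case: (ltnP 2 (len C)) => [H3 | H2].
  rewrite Hcomm //; move: Hpar H3.
  case: (len C) => [|[|[|l]]] //= <- _; rewrite negbK.
  by case: (odd l); rewrite !inE; do ![case: (_ == _)].
move: Hpar H2; case: (len C) => [|[|[|l]]] //= <- _; rewrite !inE.
all: by do ![case: (_ == _)].
Qed.

Lemma wrap_in_lam n C : wrap C \in lam n C.
Proof. by rewrite /lam; do 2!case: ifP => _; rewrite inE eqxx. Qed.

Definition ends (D : chain) : sym * sym := (head star D, last star D).

(* The members of lam n C are told apart by their first and last symbols. *)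
Lemma uniq_lam n C : odd (len C) = odd n -> uniq (lam n C).
Proof.
move=> Hpar.
have eW : ends (wrap C) = (star, star) by rewrite /ends /= last_rcons.
have e01 : ends (s0 :: rcons C s1) = (s0, s1) by rewrite /ends /= last_rcons.
have eforms : star \in C ->
    [/\ ends (fC (wrap C)) = (s0, star), ends (ellC (wrap C)) = (star, s1)
      & ends (fC (ellC (wrap C))) = (s0, s1)].
  by move=> HC; rewrite fC_ellC_wrap // fC_wrap // ellC_wrap // /ends /= !last_rcons.
apply: (@map_uniq _ _ ends); rewrite /lam; case: ifP => Hn.
  case: ifP => H2; last by rewrite !map_cons eW e01.
  have [|eF eE eFE] := eforms; first by rewrite mem_star_len; lia.
  by rewrite !map_cons eW eF eE eFE.
have [|eF eE eFE] := eforms.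
  by rewrite mem_star_len; move: Hpar Hn; case: (len C) => // <-.
case: ifP => H3; last by rewrite !map_cons eW eF eE.
by rewrite -fC_ellC ?len_wrap; [rewrite !map_cons eW eF eE eFE | lia].
Qed.

Fixpoint unmatch (h : nat) (s : chain) : chain :=
  match s with
  | [::] => [::]
  | Some false :: s' => s0 :: unmatch h.+1 s'
  | Some true :: s' => if h is h'.+1 then s1 :: unmatch h' s' else star :: s'
  | None :: s' => star :: unmatch h s'
  end.

(* Inverse of f on balanced words: the leading 0 and the 1 matching it become stars. *)
Definition unf (s : chain) : chain :=
  if s is Some false :: s' then star :: unmatch 0 s' else s.

Definition unell (s : chain) : chain := mirror (unf (mirror s)).

Definition unwrap (D : chain) : chain :=
  let W := unell (unf D) in take (size W).-2 (behead W).

Lemma unmatch_cat h h' a s :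
  height h a = Some h' -> unmatch h (a ++ s) = a ++ unmatch h' s.
Proof.
elim: a h => [|x a IH] h /=; first by case=> ->.
by case: x => [[]|] /=; [case: h => // h /IH -> | move/IH -> | case: h => // /IH ->].
Qed.

Lemma size_unmatch h s : size (unmatch h s) = size s.
Proof. by elim: s h => [|[[]|] s IH] [|h] //=; rewrite IH. Qed.

Lemma size_unf s : size (unf s) = size s.
Proof. by case: s => [|[[]|] s] //=; rewrite size_unmatch. Qed.

Lemma size_unell s : size (unell s) = size s.
Proof. by rewrite size_mirror size_unf size_mirror. Qed.

Lemma unf_fC Z : balanced Z -> star \in Z -> unf (fC (star :: Z)) = star :: Z.
Proof.
move=> HZ /(split_balanced_first_star HZ) [a [r [-> na Ha _]]].
by rewrite fC_cons_star repl_first_first_star //= (unmatch_cat _ Ha).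
Qed.

Lemma unell_ellC Z : balanced Z -> star \in Z -> unell (ellC (rcons Z star)) = rcons Z star.
Proof.
move=> HZ HZs; rewrite /unell ellC_mirror mirrorK mirror_rcons unf_fC ?mem_star_mirror //.
  by rewrite mirror_cons mirrorK.
exact: balanced_mirror.
Qed.

Lemma unell_rcons_star s : unell (rcons s star) = rcons s star.
Proof. by rewrite /unell mirror_rcons /= mirror_cons mirrorK. Qed.

Lemma unwrapE C D : unell (unf D) = wrap C -> unwrap D = C.
Proof. by rewrite /unwrap => ->; rewrite size_wrap /= -cats1 take_size_cat. Qed.

Definition lifts C D := balanced D /\ unell (unf D) = wrap C.

Lemma lifts_wrap C : balanced C -> lifts C (wrap C).
Proof. by split; [apply/balanced_rcons_star | exact: (unell_rcons_star (star :: C))]. Qed.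

Lemma lifts_fC_wrap C : balanced C -> lifts C (fC (wrap C)).
Proof.
have HCs : star \in rcons C star by rewrite mem_rcons mem_head.
move=> /balanced_rcons_star HC; split; first exact: balanced_fC.
by rewrite unf_fC //; exact: (unell_rcons_star (star :: C)).
Qed.

Lemma lifts_ellC_wrap C : balanced C -> star \in C -> lifts C (ellC (wrap C)).
Proof.
move=> HC HCs; have HCs' : star \in star :: C by rewrite mem_head.
split; first exact: (@balanced_ellC (star :: C)).
have -> : unf (ellC (wrap C)) = ellC (wrap C) by rewrite ellC_wrap.
exact: (@unell_ellC (star :: C)).
Qed.

Lemma lifts_fC_ellC_wrap C : balanced C -> 1 < len C -> lifts C (fC (ellC (wrap C))).
Proof.
move=> HC HC2; have HCs : star \in C by rewrite mem_star_len; lia.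
have [HE HEC] := lifts_ellC_wrap HC HCs.
have [Z EZ] : exists Z, ellC (wrap C) = star :: Z.
  by exists (behead (ellC (wrap C))); rewrite ellC_wrap.
have HZs : star \in Z.
  by have := @len_ellC (wrap C); rewrite EZ len_wrap len_cons mem_star_len /=; lia.
rewrite EZ in HE HEC *; split; first exact: balanced_fC.
by rewrite unf_fC.
Qed.

Lemma lifts_s0_rcons_s1 C : balanced C -> star \notin C -> lifts C (s0 :: rcons C s1).
Proof.
move=> HC nC; split; first by rewrite /= -cats1 height_cat (height_shift 1 nC HC).
by rewrite /= -cats1 (unmatch_cat _ HC) cats1; exact: (unell_rcons_star (star :: C)).
Qed.

Lemma lifts_unwrap C D : lifts C D -> [/\ balanced D, size D = (size C).+2 & unwrap D = C].
Proof.
case=> HD HDC; split => //; last exact: unwrapE.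
by rewrite -size_wrap -HDC size_unell size_unf.
Qed.

Lemma mem_lam_unwrap n C D : balanced C -> odd (len C) = odd n -> D \in lam n C ->
  [/\ balanced D, size D = (size C).+2 & unwrap D = C].
Proof.
move=> HC Hpar; rewrite mem_lam // => HD; apply: lifts_unwrap; move: HD.
case/or4P => [/eqP -> | /andP [C1] | /andP [C2 /eqP ->] | /andP [/eqP C0 /eqP ->]].
- exact: lifts_wrap.
- have HCs : star \in C by rewrite mem_star_len.
  by rewrite !inE => /orP [/eqP -> | /eqP ->]; [exact: lifts_fC_wrap | exact: lifts_ellC_wrap].
- exact: lifts_fC_ellC_wrap.
- by apply: lifts_s0_rcons_s1; rewrite // mem_star_len C0.
Qed.

Lemma s0_rcons_star_fC M : balanced (s0 :: rcons M star) ->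
  exists C, [/\ balanced C, size C = size M, star \in C & s0 :: rcons M star = fC (wrap C)].
Proof.
rewrite /= -cats1 height_cat; case HM: (height 1 M) => [[|h]|] // _.
have [a [t [-> na Ha Ht]]] := first_return HM (leqnn 0).
have HCs : star \in a ++ star :: t by rewrite mem_cat mem_head orbT.
exists (a ++ star :: t); split => //.
- by rewrite height_cat Ha.
- by rewrite !size_cat.
- by rewrite fC_wrap // repl_first_first_star // cats1.
Qed.

Lemma star_rcons_s1_ellC M : balanced (star :: rcons M s1) ->
  exists C, [/\ balanced C, size C = size M, star \in C & star :: rcons M s1 = ellC (wrap C)].
Proof.
move/balanced_mirror; rewrite mirror_cons mirror_rcons.
case/s0_rcons_star_fC => C [HC SC HCs EC]; exists (mirror C); split.
- exact: balanced_mirror.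
- by rewrite size_mirror SC size_mirror.
- by rewrite mem_star_mirror.
- by rewrite ellC_mirror mirror_wrap mirrorK -EC mirror_cons mirror_rcons mirrorK.
Qed.

Lemma s0_rcons_s1_cases M : balanced (s0 :: rcons M s1) ->
  (star \notin M /\ balanced M) \/
  exists C, [/\ balanced C, size C = size M, 1 < len C
              & s0 :: rcons M s1 = fC (ellC (wrap C))].
Proof.
move=> /= HM; have [a [t [EM na Ha Ht]]] := first_return HM (leqnn 0).
case/lastP: t EM Ht => [|t y] EM Ht.
  by left; move: EM; rewrite cats1 => /rcons_inj [->].
right; move: EM; rewrite -rcons_cons -rcons_cat => /rcons_inj [-> Ey].
rewrite -Ey in Ht.
have [|C [HC SC HCs EC]] := @star_rcons_s1_ellC (a ++ star :: t).
  by rewrite /= rcons_cat height_cat Ha.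
exists C; split => //.
- by rewrite SC !size_cat.
- have := @len_ellC (wrap C); rewrite -EC len_wrap len_cons len_rcons len_cat len_cons /=; lia.
- by rewrite -EC fC_cons_star repl_first_rcons // repl_first_first_star.
Qed.

Lemma lam_surj n D : balanced D -> size D = n.+2 ->
  exists C, [/\ balanced C, size C = n & D \in lam n C].
Proof.
case: D => [|x D] // HD; case/lastP: D HD => [|M y] HD //.
rewrite /= size_rcons => -[<-].
have Hpar C : balanced C -> size C = size M -> odd (len C) = odd (size M).
  by move=> HC <-; exact: odd_len_balanced.
case: x y HD => [[]|] [[]|] HD //; try by case: (height_rcons_s0 HD).
- case/s0_rcons_s1_cases: HD => [[nM HM] | [C [HC SC C2 ->]]]; [exists M | exists C].
    by split=> //; rewrite mem_lam ?Hpar // (len_starfree nM) /= eqxx ?orbT.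
  by split=> //; rewrite mem_lam ?Hpar // C2 /= eqxx ?orbT.
- case/s0_rcons_star_fC: HD => C [HC SC HCs ->]; exists C; split=> //.
  by rewrite mem_lam ?Hpar // -mem_star_len HCs !inE /= eqxx ?orbT.
- case/star_rcons_s1_ellC: HD => C [HC SC HCs ->]; exists C; split=> //.
  by rewrite mem_lam ?Hpar // -mem_star_len HCs !inE /= eqxx ?orbT.
- by exists M; split=> //; [apply/balanced_rcons_star | exact: wrap_in_lam].
Qed.

Lemma flatten_map_uniq (S T : eqType) (F : S -> seq T) (p : T -> S) (s : seq S) :
  uniq s -> {in s, forall x, uniq (F x)} ->
  {in s, forall x, {in F x, forall y, p y = x}} -> uniq (flatten (map F s)).
Proof.
elim: s => //= x s IH /andP [xs us] UF pF.
have sub_s : {subset s <= x :: s} by move=> y ys; rewrite inE ys orbT.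
rewrite cat_uniq UF ?mem_head // IH // => [|y /sub_s /UF | y /sub_s /pF] //; rewrite andbT.
apply/hasPn => z /flattenP [_ /mapP [y ys ->] zy]; apply/negP => zx.
by move: xs; rewrite -(pF x (mem_head _ _) z zx) (pF y (sub_s y ys) z zy) ys.
Qed.

Lemma mem_rho n C D : (D \in rho n C) = (D \in lam n C).
Proof. by rewrite /rho; case: ifP; rewrite ?mem_rev. Qed.

Lemma uniq_rho n C : uniq (rho n C) = uniq (lam n C).
Proof. by rewrite /rho; case: ifP; rewrite ?rev_uniq. Qed.

Lemma Lambda_step n :
  uniq (Lambda n) -> (forall C, C \in Lambda n <-> size C = n /\ balanced C) ->
  uniq (Lambda n.+2) /\ (forall D, D \in Lambda n.+2 <-> size D = n.+2 /\ balanced D).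
Proof.
move=> U HL; have Hpar C : C \in Lambda n -> odd (len C) = odd n.
  by case/HL => <-; exact: odd_len_balanced.
have Hbal C : C \in Lambda n -> balanced C by case/HL.
split=> [|D] /=.
  apply: (flatten_map_uniq (p := unwrap)) => // C HC; first by rewrite uniq_rho uniq_lam ?Hpar.
  by move=> D; rewrite mem_rho => /(mem_lam_unwrap (Hbal C HC) (Hpar C HC)) [].
split=> [/flattenP [_ /mapP [C HC ->]] | [SD /lam_surj /(_ SD) [C [HC SC HD]]]].
  rewrite mem_rho => /(mem_lam_unwrap (Hbal C HC) (Hpar C HC)) [HD -> _].
  by split=> //; case/HL: HC => ->.
by apply/flattenP; exists (rho n C); [apply: map_f; apply/HL | rewrite mem_rho].
Qed.

Lemma Lambda_spec n :
  uniq (Lambda n) /\ (forall C, C \in Lambda n <-> size C = n /\ balanced C).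
Proof.
have [N] := ubnP n; elim: N n => // N IHN [|[|n]] ltnN.
- by split=> // C; rewrite inE; split=> [/eqP -> | [/size0nil ->]].
- split=> // C; rewrite inE; split=> [/eqP -> // | ].
  by case: C => [|[[]|] [|? ?]] [].
- by have [] := IHN n (ltnW ltnN); exact: Lambda_step.
Qed.

Theorem lemma17 (n : nat) : 1 <= n ->
  uniq (Lambda n) /\ (forall C : chain, C \in Lambda n <-> GK_chain n C).
Proof.
move=> _; have [U HL] := Lambda_spec n; split=> // C.
by rewrite HL GK_chainE.
Qed.
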